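(* Both sets $$\{\alpha(W')\alpha(W'')(\mathbf I)\mid W'\in\mathcal W^0(\mathfrak X^{(1)}_{1\otimes2}),\ W''\in\mathcal W^0(\mathfrak X^{(2)}_{1\otimes2})\}$$ and $$\{\alpha(W')\alpha(W'')(\mathbf I)\mid W'\in\mathcal W^0(\mathfrak X^{(2)}_{2\otimes1}),\ W''\in\mathcal W^0(\mathfrak X^{(1)}_{2\otimes1})\}$$ are linearly independent subsets of $\mathcal U(\mathfrak X)$ (distinct pairs $(W',W'')$ giving linearly independent elements).
   Context: $\mathfrak X$ is the complex Lie algebra generated by $Z_1,Z_{11},Z_2,Z_{22},Z_{12}$ subject only to $[Z_1,Z_2]=[Z_{11},Z_2]=[Z_1,Z_{22}]=0$ and $[Z_{11},Z_{22}]=-[Z_{11},Z_{12}]=[Z_{22},Z_{12}]=-[Z_1-Z_2,Z_{12}]$; $\mathcal U(\mathfrak X)$ is its universal enveloping algebra with unit $\mathbf I$. $\mathfrak X^{(1)}_{1\otimes2},\mathfrak X^{(2)}_{1\otimes2},\mathfrak X^{(2)}_{2\otimes1},\mathfrak X^{(1)}_{2\otimes1}$ are the Lie subalgebras generated by $\{Z_1,Z_{11},Z_{12}\},\{Z_2,Z_{22}\},\{Z_2,Z_{22},Z_{12}\},\{Z_1,Z_{11}\}$; $\mathcal W^0(\mathfrak A)$ is the set of words (noncommutative monomials, including the empty word) in the generators of $\mathfrak A$ not ending with $Z_1$ or $Z_2$. For a word $W$, $\alpha(W)\in\mathrm{End}(\mathcal U(\mathfrak X))$ is the composition, in the order of the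 letters, of the operators $Z_1\mapsto\mathrm{ad}(Z_1)$, $Z_2\mapsto\mathrm{ad}(Z_2)$, $Z_{11}\mapsto\mu(Z_{11})$, $Z_{22}\mapsto\mu(Z_{22})$, $Z_{12}\mapsto\mu(Z_{12})$, where $\mathrm{ad}(X)F=[X,F]$ and $\mu(X)F=XF$. *)

From HB Require Import structures.
From mathcomp Require Import all_boot all_algebra.
From mathcomp Require Import complex Rstruct.
Set Implicit Arguments. Unset Strict Implicit. Unset Printing Implicit Defensive.
Import GRing.Theory.
Local Open Scope ring_scope.

Definition C : fieldType := (Rdefinitions.R)[i].

Inductive gen := Z1 | Z11 | Z2 | Z22 | Z12.

Definition gen_eqb (a b : gen) : bool :=
  match a, b with
  | Z1, Z1 | Z11, Z11 | Z2, Z2 | Z22, Z22 | Z12, Z12 => true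
  | _, _ => false
  end.
Lemma gen_eqP : Equality.axiom gen_eqb.
Proof. by case; case; constructor. Qed.
HB.instance Definition _ := hasDecEq.Build gen gen_eqP.

Definition word := seq gen.

(* The free associative C-algebra on the generators, realised as functions
   word -> C (coefficient of each monomial); product = concatenation
   convolution.  Every element we construct is finitely supported. *)
Definition FA := word -> C.

Definition fa_add (f g : FA) : FA := fun w => f w + g w.
Definition fa_sub (f g : FA) : FA := fun w => f w - g w.
Definition fa_mul (f g : FA) : FA :=
  fun w => \sum_(i < (size w).+1) f (take i w) * g (drop i w).
Definition fa_mono (u : word) : FA := fun w => if w == u then 1 else 0.
Definition fa_one : FA := fa_mono [::].
Definition fa_gen (g : gen) : FA := fa_mono [:: g].
Definition fa_comm (f g : FA) : FA := fa_sub (fa_mul f g) (fa_mul g f).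

(* Defining relations of X, written as elements of the free associative
   algebra (Lie bracket [a,b] = ab - ba):
   [Z1,Z2] = [Z11,Z2] = [Z1,Z22] = 0,
   [Z11,Z22] = -[Z11,Z12] = [Z22,Z12] = -[Z1 - Z2, Z12]. *)
Definition br (a b : gen) : FA := fa_comm (fa_gen a) (fa_gen b).
Definition rel (k : 'I_6) : FA :=
  match val k with
  | 0 => br Z1 Z2
  | 1 => br Z11 Z2
  | 2 => br Z1 Z22
  | 3 => fa_add (br Z11 Z22) (br Z11 Z12)
  | 4 => fa_sub (br Z11 Z22) (br Z22 Z12)
  | _ => fa_sub (fa_add (br Z11 Z22) (br Z1 Z12)) (br Z2 Z12)
  end.

(* Two-sided ideal generated by the relations.  U(X) is the quotient of the
   free associative algebra by this ideal (enveloping algebra of a Lie algebra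
   given by generators and relations). *)
Definition in_ideal (f : FA) : Prop :=
  exists (n : nat) (c : 'I_n -> C) (u v : 'I_n -> word) (k : 'I_n -> 'I_6),
    forall w, f w = \sum_(j < n)
      c j * fa_mul (fa_mul (fa_mono (u j)) (rel (k j))) (fa_mono (v j)) w.

Definition is_ad (g : gen) : bool :=
  match g with Z1 | Z2 => true | _ => false end.
Definition act (g : gen) (F : FA) : FA :=
  if is_ad g then fa_comm (fa_gen g) F else fa_mul (fa_gen g) F.

Definition alpha (W : word) (F : FA) : FA := foldr act F W.

Definition W0 (P : pred gen) (W : word) : bool :=
  all P W && (if W is x :: W' then ~~ is_ad (last x W') else true).

Definition gens_X1_12 : pred gen := fun g => g \in [:: Z1; Z11; Z12].
Definition gens_X2_12 : pred gen := fun g => g \in [:: Z2; Z22].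
Definition gens_X2_21 : pred gen := fun g => g \in [:: Z2; Z22; Z12].
Definition gens_X1_21 : pred gen := fun g => g \in [:: Z1; Z11].

Definition elt (p : word * word) : FA := alpha p.1 (alpha p.2 fa_one).

Definition lin_indep_in_U (P1 P2 : pred gen) : Prop :=
  forall (n : nat) (p : 'I_n -> word * word) (c : 'I_n -> C),
    injective p ->
    (forall j, W0 P1 (p j).1 && W0 P2 (p j).2) ->
    in_ideal (fun w => \sum_(j < n) c j * elt (p j) w) ->
    forall j, c j = 0.

From Pilot Require Import Defs.
From mathcomp Require Import all_boot all_algebra.
From mathcomp Require Import ring zify.
From Stdlib Require Import FunctionalExtensionality.
Set Implicit Arguments. Unset Strict Implicit. Unset Printing Implicit Defensive.
Import GRing.Theory.
Local Open Scope ring_scope.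

(* Let A be the set of generators of the first subalgebra and B that of the second (in
   both families).  By the defining relations, the bracket of a generator of B with one
   of A is a quadratic expression in the generators of A, and no relation involves two
   generators of B.  Hence X acts on T(A) (x) T(B), the tensor product of the free
   algebras: a generator a of A by left multiplication by a on the first factor, a
   generator b of B by D_b (x) 1 + 1 (x) b, where D_b is the derivation of T(A) extending
   ad b.  This action kills the defining relations, so U(X) acts.  The ad-letters of W'
   commute with B, hence alpha(W') alpha(W'') I maps 1 (x) 1 to
   alpha(W')(1) (x) alpha(W'')(1), computed in free algebras.  Since W' and W'' do not end
   with an ad-letter, alpha(W)(1) is W plus words that have the same number of ad-letters
   and more pairs (letter, later ad-letter); the family is therefore triangular. *)

Definition gens : seq gen := [:: Z1; Z11; Z2; Z22; Z12].

Lemma mem_gens g : g \in gens. Proof. by case: g. Qed.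

Fixpoint words n : seq word :=
  if n is m.+1 then [seq g :: w | g <- gens, w <- words m] else [:: [::]].

Lemma mem_words n w : (w \in words n) = (size w == n).
Proof.
elim: n w => [|n IH] w; first by case: w.
apply/allpairsP/idP => [[[g w']] /= [_ + ->]|]; first by rewrite IH.
case: w => [|g w] //=; rewrite eqSS -IH => w_n.
by exists (g, w); rewrite mem_gens.
Qed.

Lemma uniq_words n : uniq (words n).
Proof.
elim: n => [|n IH] //; apply: allpairs_uniq => //.
by move=> [g w] [g' w'] _ _ /= [-> ->].
Qed.

Lemma big_words_cat (h : word -> C) m n :
  \sum_(w <- words (m + n)) h w = \sum_(x <- words m) \sum_(y <- words n) h (x ++ y).
Proof.
rewrite -(big_allpairs_dep (h := cat) (r2 := fun=> words n)).
apply/perm_big/uniq_perm; first exact: uniq_words.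
  apply: allpairs_uniq; try exact: uniq_words.
  move=> [x y] [x' y'] /allpairsP [[x1 y1] /= [x1m _ [-> ->]]].
  move=> /allpairsP [[x2 y2] /= [x2m _ [-> ->]]] /= /eqP.
  move: x1m x2m; rewrite !mem_words => /eqP sx1 /eqP sx2.
  by rewrite eqseq_cat ?sx1 ?sx2 // => /andP [/eqP -> /eqP ->].
move=> w; rewrite mem_words; apply/idP/allpairsP => [/eqP sw|].
  exists (take m w, drop m w); rewrite cat_take_drop !mem_words size_drop sw.
  by rewrite size_takel ?sw ?leq_addr // addKn.
by case=> [[x y] /= [+ + ->]]; rewrite !mem_words size_cat => /eqP -> /eqP ->.
Qed.

Lemma big_cond_pred1 (R : nmodType) (I : eqType) (s : seq I) a (F : I -> R) :
  uniq s -> a \in s -> \sum_(x <- s | x == a) F x = F a.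
Proof. by move=> s_uniq sa; rewrite -big_filter filter_pred1_uniq // big_seq1. Qed.

Lemma fa_mul_monoL u F w :
  fa_mul (fa_mono u) F w = if take (size u) w == u then F (drop (size u) w) else 0.
Proof.
rewrite /fa_mul /fa_mono.
under eq_bigr => i _ do rewrite (fun_if (fun x => x * _)) mul1r mul0r.
have size_take_ord (i : 'I_(size w).+1) : size (take i w) = i.
  by rewrite size_takel // -ltnS.
case: (leqP (size u) (size w)) => [le_uw|lt_wu]; last first.
  rewrite take_oversize ?(ltnW lt_wu) // big1 => [|i _].
    by case: eqP => // wu; move: lt_wu; rewrite wu ltnn.
  case: eqP => // tu; move: (ltn_ord i); rewrite ltnS -(size_take_ord i) tu.
  by rewrite leqNgt lt_wu.
rewrite (bigD1 (Ordinal (le_uw : size u < (size w).+1)%N)) // big1 ?Monoid.mulm1 // => i ne_iu.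
case: eqP => // tu; case/eqP: ne_iu; apply: val_inj => /=.
by rewrite -(size_take_ord i) tu.
Qed.

Lemma fa_mul_monoR F v w :
  fa_mul F (fa_mono v) w =
  if drop (size w - size v) w == v then F (take (size w - size v) w) else 0.
Proof.
rewrite /fa_mul /fa_mono.
under eq_bigr => i _ do rewrite (fun_if (fun x => _ * x)) mulr1 mulr0.
have size_drop_ord (i : 'I_(size w).+1) : drop i w = v -> i = (size w - size v)%N :> nat.
  by move=> dv; have := ltn_ord i; rewrite -dv size_drop; lia.
case: (leqP (size v) (size w)) => [le_vw|lt_wv]; last first.
  rewrite big1 => [|i _]; last first.
    by case: eqP => // dv; move: lt_wv; rewrite -dv size_drop; lia.
  have -> : (size w - size v = 0)%N by lia.
  by rewrite drop0; case: eqP => // wv; move: lt_wv; rewrite wv ltnn.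
have lt_n : (size w - size v < (size w).+1)%N by rewrite ltnS leq_subr.
rewrite (bigD1 (Ordinal lt_n)) // big1 ?Monoid.mulm1 // => i ne_in.
case: eqP => // /size_drop_ord di; case/eqP: ne_in; exact: val_inj.
Qed.

(* Coefficient functions on pairs of words: the completed tensor square of the free algebra. *)
Definition FA2 := word -> word -> C.

Definition zero2 : FA2 := fun _ _ => 0.

Lemma FA2_ext (F G : FA2) : (forall u v, F u v = G u v) -> F = G.
Proof.
move=> FG; apply: functional_extensionality => u.
by apply: functional_extensionality => v; exact: FG.
Qed.

Definition lin_op (T : FA2 -> FA2) :=
  forall (I : Type) (s : seq I) (c : I -> C) (F : I -> FA2),
    T (fun u v => \sum_(i <- s) c i * F i u v) = fun u v => \sum_(i <- s) c i * T (F i) u v.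

Section LinearOperators.

Variable T : FA2 -> FA2.
Hypothesis T_lin : lin_op T.

Lemma lin_op0 : T zero2 = zero2.
Proof.
transitivity (T (fun u v => \sum_(i <- [::] : seq unit) 0 * zero2 u v)).
  by congr T; apply: FA2_ext => u v; rewrite big_nil.
by rewrite T_lin; apply: FA2_ext => u v; rewrite big_nil.
Qed.

Lemma lin_opD F G : T (fun u v => F u v + G u v) = fun u v => T F u v + T G u v.
Proof.
transitivity (T (fun u v => \sum_(b <- [:: true; false]) 1 * (if b then F else G) u v)).
  by congr T; apply: FA2_ext => u v; rewrite !big_cons big_nil /= !mul1r addr0.
by rewrite T_lin; apply: FA2_ext => u v; rewrite !big_cons big_nil /= !mul1r addr0.
Qed.

Lemma lin_opB F G : T (fun u v => F u v - G u v) = fun u v => T F u v - T G u v.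
Proof.
transitivity
  (T (fun u v => \sum_(b <- [:: true; false]) (if b then 1 else -1) * (if b then F else G) u v)).
  by congr T; apply: FA2_ext => u v; rewrite !big_cons big_nil /= mul1r mulN1r addr0.
by rewrite T_lin; apply: FA2_ext => u v; rewrite !big_cons big_nil /= mul1r mulN1r addr0.
Qed.

End LinearOperators.

Section HomogeneousAction.

Variable rho : gen -> FA2 -> FA2.
Hypothesis rho_lin : forall g, lin_op (rho g).

Definition rho_word (w : word) (G : FA2) : FA2 := foldr rho G w.

Lemma lin_rho_word w : lin_op (rho_word w).
Proof. by elim: w => [|g w IH] I s c F //=; rewrite IH rho_lin. Qed.

(* The action of the degree-[n] component of [f]; only finitely many words have degree [n]. *)
Definition act_deg n (f : FA) (G : FA2) : FA2 :=
  fun u v => \sum_(w <- words n) f w * rho_word w G u v.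

Lemma eq_act_deg n f f' G : f =1 f' -> act_deg n f G = act_deg n f' G.
Proof. by move=> ff'; apply: FA2_ext => u v; apply: eq_bigr => w _; rewrite ff'. Qed.

Lemma act_deg_sum n m (c : 'I_m -> C) (f : 'I_m -> FA) G :
  act_deg n (fun w => \sum_(j < m) c j * f j w) G =
  fun u v => \sum_(j < m) c j * act_deg n (f j) G u v.
Proof.
apply: FA2_ext => u v; rewrite /act_deg.
under eq_bigr do rewrite mulr_suml.
rewrite exchange_big; apply: eq_bigr => j _; rewrite mulr_sumr.
by apply: eq_bigr => w _; rewrite mulrA.
Qed.

Lemma act_degD n f g G :
  act_deg n (fa_add f g) G = fun u v => act_deg n f G u v + act_deg n g G u v.
Proof. by apply: FA2_ext => u v; rewrite -big_split; apply: eq_bigr => w _; rewrite mulrDl. Qed.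

Lemma act_degB n f g G :
  act_deg n (fa_sub f g) G = fun u v => act_deg n f G u v - act_deg n g G u v.
Proof. by apply: FA2_ext => u v; rewrite -sumrB; apply: eq_bigr => w _; rewrite mulrBl. Qed.

Lemma act_deg_mono n m G :
  act_deg n (fa_mono m) G = if size m == n then rho_word m G else zero2.
Proof.
apply: FA2_ext => u v; rewrite /act_deg /fa_mono.
under eq_bigr do rewrite (fun_if (fun x => x * _)) mul1r mul0r.
rewrite -big_mkcond; case: ifP => [/eqP <-|m_n].
  by rewrite big_cond_pred1 ?mem_words ?uniq_words.
rewrite big_seq_cond big1 // => w /andP [/[!mem_words] /eqP sw /eqP wm].
by move: m_n; rewrite -sw wm eqxx.
Qed.

Lemma act_deg_mono_mul n a F G :
  act_deg n (fa_mul (fa_mono a) F) G =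
  if (size a <= n)%N then rho_word a (act_deg (n - size a) F G) else zero2.
Proof.
apply: FA2_ext => u v; rewrite /act_deg.
under eq_bigr do rewrite fa_mul_monoL.
case: leqP => [le_an|lt_na]; last first.
  rewrite big_seq big1 // => w /[!mem_words] /eqP sw.
  rewrite take_oversize ?sw ?(ltnW lt_na) //; case: eqP => [wa|]; last by rewrite mul0r.
  by move: lt_na; rewrite -sw wa ltnn.
rewrite -{1}(subnKC le_an) big_words_cat (lin_rho_word a).
rewrite (eq_big_seq (fun x => if x == a then
    \sum_(y <- words (n - size a)) F y * rho_word a (rho_word y G) u v else 0)); last first.
  move=> x /[!mem_words] /eqP sx; case: eqP => [xa|nxa].
    by apply: eq_bigr => y _; rewrite take_size_cat // drop_size_cat // xa eqxx /rho_word foldr_cat.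
  by rewrite big1 // => y _; rewrite take_size_cat //; case: eqP => // _; rewrite mul0r.
by rewrite -big_mkcond big_cond_pred1 ?mem_words ?uniq_words.
Qed.

Lemma act_deg_mul_mono n b F G :
  act_deg n (fa_mul F (fa_mono b)) G =
  if (size b <= n)%N then act_deg (n - size b) F (rho_word b G) else zero2.
Proof.
apply: FA2_ext => u v; rewrite /act_deg.
under eq_bigr do rewrite fa_mul_monoR.
case: leqP => [le_bn|lt_nb]; last first.
  rewrite big_seq big1 // => w /[!mem_words] /eqP sw.
  have -> : (size w - size b = 0)%N by lia.
  rewrite drop0; case: eqP => [wb|]; last by rewrite mul0r.
  by move: lt_nb; rewrite -sw wb ltnn.
rewrite -{1}(subnK le_bn) big_words_cat; apply: eq_big_seq => x /[!mem_words] /eqP sx.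
rewrite (eq_big_seq (fun y => if y == b then F x * rho_word x (rho_word b G) u v else 0)).
  by rewrite -big_mkcond big_cond_pred1 ?mem_words ?uniq_words.
move=> y /[!mem_words] /eqP sy; rewrite size_cat sy addnK drop_size_cat // take_size_cat //.
by case: eqP => [->|_]; rewrite ?mul0r // /rho_word foldr_cat.
Qed.

Lemma act_deg_br m a b G :
  act_deg m (br a b) G =
  if (m == 2)%N then (fun u v => rho a (rho b G) u v - rho b (rho a G) u v) else zero2.
Proof.
rewrite /br /fa_comm act_degB /fa_gen !act_deg_mono_mul !act_deg_mono.
case: m => [|[|[|m]]] //=; rewrite ?lin_op0 //; apply: FA2_ext => u v; exact: subrr.
Qed.

Lemma act_deg_ideal_gen n u r v G :
  (forall m H, act_deg m r H = zero2) ->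
  act_deg n (fa_mul (fa_mul (fa_mono u) r) (fa_mono v)) G = zero2.
Proof.
move=> r0; rewrite act_deg_mul_mono; case: ifP => // _.
by rewrite act_deg_mono_mul; case: ifP => // _; rewrite r0 lin_op0 //; exact: lin_rho_word.
Qed.

Lemma act_deg_in_ideal n f G :
  (forall k m H, act_deg m (Defs.rel k) H = zero2) -> in_ideal f -> act_deg n f G = zero2.
Proof.
move=> rel0 [m [c [u [v [k fE]]]]]; rewrite (eq_act_deg _ _ fE) act_deg_sum.
by apply: FA2_ext => x y; rewrite big1 // => j _; rewrite act_deg_ideal_gen // mulr0.
Qed.

(* The recursion defining [alpha], run on operators: [ad x] becomes the commutator with [rho x]. *)
Fixpoint alpha_op (W : word) (K : FA2 -> FA2) (G : FA2) : FA2 :=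
  match W with
  | [::] => K G
  | x :: W' =>
      if is_ad x then fun u v => rho x (alpha_op W' K G) u v - alpha_op W' K (rho x G) u v
      else rho x (alpha_op W' K G)
  end.

Lemma alpha_op0 W G : alpha_op W (fun=> zero2) G = zero2.
Proof.
elim: W G => [|x W IH] G //=; rewrite !IH lin_op0 //.
by case: (is_ad x) => //; apply: FA2_ext => u v; exact: subrr.
Qed.

Lemma act_deg0_act g F G : act_deg 0 (act g F) G = zero2.
Proof.
rewrite /act /fa_comm /fa_gen; case: (is_ad g); rewrite ?act_degB !act_deg_mono_mul //=.
by rewrite act_deg_mul_mono; apply: FA2_ext => u v; rewrite /zero2 subrr.
Qed.

Lemma act_degS_act n g F G : act_deg n.+1 (act g F) G = alpha_op [:: g] (act_deg n F) G.
Proof.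
rewrite /act /fa_comm /fa_gen /=; case: (is_ad g).
  by rewrite act_degB act_deg_mono_mul act_deg_mul_mono /= !subn1.
by rewrite act_deg_mono_mul /= subn1.
Qed.

Lemma act_deg_alpha W m F G :
  act_deg (size W + m) (alpha W F) G = alpha_op W (act_deg m F) G.
Proof.
elim: W G => [|x W IH] G //=; rewrite addSn act_degS_act.
suff -> : act_deg (size W + m) (alpha W F) = alpha_op W (act_deg m F) by [].
by apply: functional_extensionality => H; exact: IH.
Qed.

Lemma act_deg_alpha_small W n F G : (n < size W)%N -> act_deg n (alpha W F) G = zero2.
Proof.
elim: W n G => [|x W IH] [|n] G //= lt_nW; first exact: act_deg0_act.
rewrite act_degS_act /=; have IH0 H : act_deg n (alpha W F) H = zero2 by exact: IH.
by case: (is_ad x); rewrite !IH0 lin_op0 //; apply: FA2_ext => u v; rewrite /zero2 subrr.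
Qed.

Lemma act_deg_one n : act_deg n fa_one = if n == 0%N then id else fun=> zero2.
Proof.
by apply: functional_extensionality => G; rewrite act_deg_mono; case: n.
Qed.

Lemma act_deg_alpha_one W n :
  act_deg n (alpha W fa_one) = if n == size W then alpha_op W id else fun=> zero2.
Proof.
apply: functional_extensionality => G.
case: (ltnP n (size W)) => [lt_nW|le_Wn].
  by rewrite act_deg_alpha_small // (ltn_eqF lt_nW).
have [m ->] : exists m, n = (size W + m)%N by exists (n - size W)%N; rewrite subnKC.
rewrite act_deg_alpha act_deg_one -{2}(addn0 (size W)) eqn_add2l.
by case: (_ == 0)%N => //; rewrite alpha_op0.
Qed.

Lemma act_deg_elt n p G :
  act_deg n (elt p) G =
  if n == (size p.1 + size p.2)%N then alpha_op p.1 (alpha_op p.2 id) G else zero2.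
Proof.
case: (ltnP n (size p.1)) => [lt_n1|le_1n].
  by rewrite act_deg_alpha_small // ifN // neq_ltn (leq_trans lt_n1) ?leq_addr.
have [m ->] : exists m, n = (size p.1 + m)%N by exists (n - size p.1)%N; rewrite subnKC.
rewrite act_deg_alpha act_deg_alpha_one eqn_add2l.
by case: (_ == _) => //; rewrite alpha_op0.
Qed.

Lemma alpha_op_commute a W K :
  (forall G, rho a (K G) = K (rho a G)) ->
  (forall x, x \in W -> forall G, rho a (rho x G) = rho x (rho a G)) ->
  forall G, rho a (alpha_op W K G) = alpha_op W K (rho a G).
Proof.
move=> aK; elim: W => [|x W IH] aW G //=.
have {}IH := IH (fun y yW => aW y (@mem_behead _ (x :: W) y yW)).
case: (is_ad x); last by rewrite (aW x) ?mem_head // IH.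
by rewrite (lin_opB (rho_lin a)) (aW x) ?mem_head // !IH (aW x) ?mem_head.
Qed.

Lemma alpha_op_comp W K :
  (forall x, x \in W -> is_ad x -> forall G, rho x (K G) = K (rho x G)) ->
  forall G, alpha_op W K G = alpha_op W id (K G).
Proof.
elim: W => [|x W IH] xK G //=.
have {}IH := IH (fun y yW => xK y (@mem_behead _ (x :: W) y yW)).
by case ad_x: (is_ad x); rewrite !IH // xK ?mem_head.
Qed.

End HomogeneousAction.

Definition lmul (a : gen) (f : FA) : FA :=
  fun w => if w is x :: w' then if x == a then f w' else 0 else 0.

(* [alpha_free W f] is [alpha(W)(1)] times [f] in the free algebra: the recursion of
   [alpha_op] for the left regular action. *)
Fixpoint alpha_free (W : word) (f : FA) : FA :=
  match W with
  | [::] => f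
  | x :: W' =>
      if is_ad x then fun w => lmul x (alpha_free W' f) w - alpha_free W' (lmul x f) w
      else lmul x (alpha_free W' f)
  end.

Lemma lmul_nil a f : lmul a f [::] = 0. Proof. by []. Qed.

Lemma lmul_cons a f x w : lmul a f (x :: w) = if x == a then f w else 0.
Proof. by []. Qed.

Lemma lmul_mono x w : lmul x (fa_mono w) = fa_mono (x :: w).
Proof.
apply: functional_extensionality => -[|y w'] //=.
by rewrite /fa_mono eqseq_cons; case: (y == x).
Qed.

Fixpoint pot (w : word) : nat :=
  if w is x :: w' then (pot w' + count is_ad w')%N else 0%N.

Lemma pot_cat s t : pot (s ++ t) = (pot s + pot t + size s * count is_ad t)%N.
Proof. by elim: s => [|x s IH] /=; rewrite ?mul0n ?addn0 // IH count_cat; lia. Qed.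

Definition lead_word (W : word) (f : FA) :=
  f W = 1 /\ forall w, f w != 0 ->
    w = W \/ (count is_ad w = count is_ad W /\ (pot W < pot w)%N).

Lemma lead_word_mono w : lead_word w (fa_mono w).
Proof.
split=> [|w']; first by rewrite /fa_mono eqxx.
by rewrite /fa_mono; case: (w' =P w) => [-> _|_]; [left | rewrite eqxx].
Qed.

Lemma lead_word_lmul x W f : lead_word W f -> lead_word (x :: W) (lmul x f).
Proof.
case=> fW f_lead; split=> [|[|y w]]; rewrite /lmul ?eqxx ?fW //.
case: (y =P x) => [->|_]; last by rewrite eqxx.
case/f_lead=> [->|[cnt lt_pot]]; first by left.
by right; rewrite /= cnt; split=> //; lia.
Qed.

Lemma lead_word_sub W W' f g : lead_word W f -> lead_word W' g ->
  count is_ad W = count is_ad W' -> (pot W < pot W')%N ->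
  lead_word W (fun w => f w - g w).
Proof.
move=> [fW f_lead] [gW' g_lead] cnt lt_pot.
have gW : g W = 0.
  apply/eqP; apply: contraT => /g_lead [eWW'|[_ lt_pot']].
    by move: lt_pot; rewrite eWW' ltnn.
  by move: (ltn_trans lt_pot lt_pot'); rewrite ltnn.
split=> [|w]; first by rewrite fW gW subr0.
have [f0 fg|/f_lead //] := eqVneq (f w) 0.
have /g_lead [->|[cnt' lt_pot']] : g w != 0 by move: fg; rewrite f0 sub0r oppr_eq0.
  by right.
by right; rewrite cnt' -cnt; split=> //; exact: ltn_trans lt_pot'.
Qed.

Definition ends_non_ad (W : word) : bool :=
  if W is x :: W' then ~~ is_ad (last x W') else true.

Lemma count_ad_lt_size x W :
  ~~ is_ad (last x W) -> (count is_ad (x :: W) < size (x :: W))%N.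
Proof.
move=> last_nad; rewrite -(count_predC is_ad) -{1}[count is_ad _]addn0 ltn_add2l -has_count.
by apply/hasP; exists (last x W); rewrite ?mem_last.
Qed.

(* Moving an ad-letter [x] of [x :: W] to the right of [W] strictly increases [pot]
   because [W] contains a letter that is not an ad-letter. *)
Lemma lead_word_alpha_free W w : ends_non_ad W -> lead_word (W ++ w) (alpha_free W (fa_mono w)).
Proof.
elim: W w => [|x W IH] w /=; first by move=> _; exact: lead_word_mono.
case: W IH => [|y W] IH last_nad.
  by rewrite /= (negbTE last_nad) lmul_mono; exact: lead_word_mono.
have {}IH := IH _ last_nad.
case ad_x: (is_ad x); last exact: lead_word_lmul.
rewrite lmul_mono; apply: lead_word_sub (lead_word_lmul x (IH w)) (IH (x :: w)) _ _.
  by rewrite /= !count_cat /= ad_x; lia.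
have := count_ad_lt_size last_nad.
by rewrite /= !pot_cat /= !count_cat /= ad_x; lia.
Qed.

Lemma lead_word_mul W1 W2 f g (y : word * word) :
  lead_word W1 f -> lead_word W2 g -> f y.1 * g y.2 != 0 ->
  y = (W1, W2) \/ (pot W1 + pot W2 < pot y.1 + pot y.2)%N.
Proof.
case: y => [y1 y2] [_ f_lead] [_ g_lead] /=.
rewrite mulf_eq0 negb_or => /andP [/f_lead f_y1 /g_lead g_y2].
by case: f_y1 g_y2 => [->|[_ lt1]] [->|[_ lt2]]; [left | right; lia ..].
Qed.

Lemma triangular_coef_eq0 (R : pzRingType) (X : Type) n (x : 'I_n -> X) (T : 'I_n -> X -> R)
    (key : X -> nat) (c : 'I_n -> R) :
  injective x -> (forall j, T j (x j) = 1) ->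
  (forall j y, T j y != 0 -> y = x j \/ (key (x j) < key y)%N) ->
  (forall y, \sum_(j < n) c j * T j y = 0) ->
  forall j, c j = 0.
Proof.
move=> x_inj Tjj T_tri sum0.
suff c0 M j : (key (x j) < M)%N -> c j = 0 by move=> j; exact: (c0 (key (x j)).+1).
elim: M j => [//|M IH] j; rewrite ltnS => le_jM.
have := sum0 (x j); rewrite (bigD1 j) // Tjj mulr1 big1 ?Monoid.mulm1 // => k ne_kj.
have [->|ck] := eqVneq (c k) 0; first by rewrite mul0r.
have [->|/T_tri [/x_inj eq_jk|lt_kj]] := eqVneq (T k (x j)) 0; first by rewrite mulr0.
  by move: ne_kj; rewrite eq_jk eqxx.
by move: ck; rewrite (IH k (leq_trans lt_kj le_jM)) eqxx.
Qed.

Definition brc (x y c c' : gen) : C :=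
  (if (c == x) && (c' == y) then 1 else 0) - (if (c == y) && (c' == x) then 1 else 0).

Definition tensor (f g : FA) : FA2 := fun u v => f u * g v.

Lemma fa_one_cons x w : fa_one (x :: w) = 0. Proof. by []. Qed.

Section Representation.

Variable isA : pred gen.
(* [dco b a c c'] is the coefficient of [c c'] in [[b, a]], for [a] in [isA] and [b] not. *)
Variable dco : gen -> gen -> gen -> gen -> C.

Definition lmul1 (a : gen) (F : FA2) : FA2 := fun u v => lmul a (F^~ v) u.
Definition lmul2 (b : gen) (F : FA2) : FA2 := fun u v => lmul b (F u) v.
Definition lmulq (q : gen -> gen -> C) (F : FA2) : FA2 :=
  fun u v => if u is c :: c' :: u' then q c c' * F u' v else 0.

(* The coefficient of [u] in [D f], where [D] is the derivation of the free algebra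
   mapping each generator [a] to [\sum_(c, c') d a c c' * c c']. *)
Fixpoint der_coef (d : gen -> gen -> gen -> C) (u : word) (f : FA) : C :=
  if u is c :: u' then
    der_coef d u' (fun w => f (c :: w)) +
    (if u' is c' :: u'' then \sum_(a <- gens) d a c c' * f (a :: u'') else 0)
  else 0.

Lemma der_coef_nil d f : der_coef d [::] f = 0. Proof. by []. Qed.

Lemma der_coef1 d c f : der_coef d [:: c] f = 0.
Proof. exact: addr0. Qed.

Lemma der_coef2 d c c' u f :
  der_coef d [:: c, c' & u] f =
  der_coef d (c' :: u) (fun w => f (c :: w)) + \sum_(a <- gens) d a c c' * f (a :: u).
Proof. by []. Qed.

Arguments der_coef : simpl never.

Definition der (b : gen) (F : FA2) : FA2 := fun u v => der_coef (dco b) u (F^~ v).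

Definition rep (g : gen) (F : FA2) : FA2 :=
  if isA g then lmul1 g F else fun u v => der g F u v + lmul2 g F u v.

Lemma lin_lmul1 a : lin_op (lmul1 a).
Proof.
move=> I s c F; apply: FA2_ext => -[|x u] v; rewrite /lmul1.
  by rewrite lmul_nil big1 // => i _; rewrite lmul_nil mulr0.
rewrite lmul_cons; under [RHS]eq_bigr do rewrite lmul_cons.
by case: (x == a) => //; rewrite big1 // => i _; rewrite mulr0.
Qed.

Lemma lin_lmul2 b : lin_op (lmul2 b).
Proof.
move=> I s c F; apply: FA2_ext => u [|y v]; rewrite /lmul2.
  by rewrite lmul_nil big1 // => i _; rewrite lmul_nil mulr0.
rewrite lmul_cons; under [RHS]eq_bigr do rewrite lmul_cons.
by case: (y == b) => //; rewrite big1 // => i _; rewrite mulr0.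
Qed.

Lemma der_coef_lin d u (I : Type) (s : seq I) (c : I -> C) (f : I -> FA) :
  der_coef d u (fun w => \sum_(i <- s) c i * f i w) = \sum_(i <- s) c i * der_coef d u (f i).
Proof.
elim: u f => [|c0 u IH] f.
  by rewrite der_coef_nil big1 // => i _; rewrite der_coef_nil mulr0.
case: u IH => [|c' u] IH.
  by rewrite der_coef1 big1 // => i _; rewrite der_coef1 mulr0.
rewrite der_coef2 (IH (fun i w => f i (c0 :: w))).
under [RHS]eq_bigr do rewrite der_coef2 mulrDr.
rewrite big_split; congr (_ + _).
under eq_bigr do rewrite mulr_sumr.
rewrite exchange_big; apply: eq_bigr => i _; rewrite mulr_sumr.
by apply: eq_bigr => a _; rewrite mulrCA.
Qed.

Lemma lin_rep g : lin_op (rep g).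
Proof.
rewrite /rep; case: (isA g); first exact: lin_lmul1.
move=> I s c F; apply: FA2_ext => u v.
rewrite /der der_coef_lin (lin_lmul2 g s c F) -big_split.
by apply: eq_bigr => i _; rewrite mulrDr.
Qed.

Lemma der_coef_eq0 d u f : (forall x w, f (x :: w) = 0) -> der_coef d u f = 0.
Proof.
elim: u f => [|c u IH] f f0; first exact: der_coef_nil.
case: u IH => [|c' u] IH; first exact: der_coef1.
rewrite der_coef2 (IH _ (fun x w => f0 c (x :: w))) add0r.
by rewrite big1 // => a _; rewrite f0 mulr0.
Qed.

Lemma der_lmul1 b a G :
  der b (lmul1 a G) = fun u v => lmul1 a (der b G) u v + lmulq (dco b a) G u v.
Proof.
apply: FA2_ext => -[|c [|c' u]] v; rewrite /der /lmul1 /lmulq.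
- by rewrite der_coef_nil addr0.
- by rewrite der_coef1 addr0 lmul_cons; case: (c == a).
rewrite der_coef2 lmul_cons; congr (_ + _).
  have -> : (fun w => lmul a (G^~ v) (c :: w)) = if c == a then G^~ v else fun=> 0.
    by apply: functional_extensionality => w; rewrite lmul_cons; case: (c == a).
  by case: (c == a) => //; rewrite der_coef_eq0.
under eq_bigr => x _ do rewrite lmul_cons (fun_if (GRing.mul (dco b x c c'))) mulr0.
by rewrite -big_mkcond big_cond_pred1 ?mem_gens.
Qed.

Lemma lmul1_lmul2 a b G : lmul1 a (lmul2 b G) = lmul2 b (lmul1 a G).
Proof.
by apply: FA2_ext => -[|x u] [|y v] //=; try case: (x == a); try case: (y == b).
Qed.

Lemma rep_commAA a b G u v : isA a -> isA b ->
  rep a (rep b G) u v - rep b (rep a G) u v = lmulq (brc a b) G u v.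
Proof.
move=> Aa Ab; rewrite /rep Aa Ab.
(* Reduce with [cbv] and an explicit delta list: [simpl] would unfold the field
   operations of the concrete [C]. *)
case: u => [|c [|c' u]]; cbv beta iota delta [lmul1 lmul lmulq brc].
- exact: subrr.
- by rewrite !if_same subrr.
case: (c == a); case: (c' == b); case: (c == b); case: (c' == a); cbv beta iota delta [andb].
all: ring.
Qed.

Lemma rep_commAB a b G u v : isA a -> ~~ isA b ->
  rep b (rep a G) u v - rep a (rep b G) u v = lmulq (dco b a) G u v.
Proof.
move=> Aa nAb; rewrite /rep Aa (negbTE nAb) (lin_opD (lin_lmul1 a)) der_lmul1 lmul1_lmul2.
cbv beta iota; ring.
Qed.

(* The bracket [[a, b]] as a quadratic element of the free algebra on [isA]. *)
Definition brq (a b : gen) : gen -> gen -> C :=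
  if isA a then (if isA b then brc a b else fun c c' => - dco b a c c') else dco a b.

Lemma rep_comm a b G u v : isA a || isA b ->
  rep a (rep b G) u v - rep b (rep a G) u v = lmulq (brq a b) G u v.
Proof.
rewrite /brq; case Aa: (isA a); case Ab: (isA b) => // _.
- exact: rep_commAA.
- rewrite -opprB rep_commAB ?Ab //.
  by case: u => [|c [|c' u]]; cbv beta iota delta [lmulq]; rewrite ?oppr0 ?mulNr.
- by apply: rep_commAB; rewrite ?Aa ?Ab.
Qed.

Lemma act_deg_rep_br m a b G : isA a || isA b ->
  act_deg rep m (br a b) G = if (m == 2)%N then lmulq (brq a b) G else zero2.
Proof.
move=> ab; rewrite (act_deg_br lin_rep); case: (m == 2)%N => //.
by apply: FA2_ext => u v; exact: rep_comm.
Qed.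

Lemma rep_commute a b : isA a -> ~~ isA b -> (forall c c', dco b a c c' = 0) ->
  forall G, rep a (rep b G) = rep b (rep a G).
Proof.
move=> Aa nAb dba0 G; apply: FA2_ext => u v; apply/eqP.
rewrite eq_sym -subr_eq0 rep_commAB //; apply/eqP.
by case: u => [|c [|c' u]]; cbv beta iota delta [lmulq]; rewrite ?dba0 ?mul0r.
Qed.

Lemma rep_tensorA a f g : isA a -> rep a (tensor f g) = tensor (lmul a f) g.
Proof.
move=> Aa; rewrite /rep Aa; apply: FA2_ext => -[|x u] v.
  by cbv beta iota delta [lmul1 lmul tensor]; rewrite mul0r.
by cbv beta iota delta [lmul1 lmul tensor]; case: (x == a); rewrite ?mul0r.
Qed.

Lemma rep_tensorB b g : ~~ isA b -> rep b (tensor fa_one g) = tensor fa_one (lmul b g).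
Proof.
move=> nAb; rewrite /rep (negbTE nAb); apply: FA2_ext => u v; cbv beta iota.
rewrite /der der_coef_eq0 => [|x w]; last by rewrite /tensor fa_one_cons mul0r.
rewrite add0r /lmul2 /tensor; case: v => [|y v]; first by rewrite !lmul_nil mulr0.
by rewrite !lmul_cons; case: (y == b); rewrite ?mulr0.
Qed.

Lemma alpha_op_tensorA W f g :
  all isA W -> alpha_op rep W id (tensor f g) = tensor (alpha_free W f) g.
Proof.
elim: W f => [|x W IH] f //; case/andP => Ax AW; cbn [alpha_op alpha_free].
rewrite IH //; case: (is_ad x); rewrite !rep_tensorA // IH //.
by apply: FA2_ext => u v; rewrite /tensor; ring.
Qed.

Lemma alpha_op_tensorB W g :
  all (predC isA) W -> alpha_op rep W id (tensor fa_one g) = tensor fa_one (alpha_free W g).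
Proof.
elim: W g => [|x W IH] g //; case/andP => nAx BW; cbn [alpha_op alpha_free].
rewrite IH //; case: (is_ad x); rewrite !rep_tensorB // IH //.
by apply: FA2_ext => u v; rewrite /tensor; ring.
Qed.

Hypothesis dco_ad : forall a b, isA a -> is_ad a -> ~~ isA b -> forall c c', dco b a c c' = 0.

(* The ad-letters of [W1] commute with every letter of [W2], so [alpha_op] of [W1] can be
   applied after that of [W2]. *)
Lemma alpha_op_tensor_one W1 W2 : all isA W1 -> all (predC isA) W2 ->
  alpha_op rep W1 (alpha_op rep W2 id) (tensor fa_one fa_one) =
  tensor (alpha_free W1 fa_one) (alpha_free W2 fa_one).
Proof.
move=> AW1 BW2; rewrite alpha_op_comp => [|x xW1 ad_x G].
  by rewrite alpha_op_tensorB // alpha_op_tensorA.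
have Ax : isA x by exact: (allP AW1).
apply: (alpha_op_commute lin_rep) => // y yW2 H.
by apply: rep_commute => //; [exact: (allP BW2) | apply: dco_ad => //; exact: (allP BW2)].
Qed.

Lemma lin_indep_in_U_of_rep (P1 P2 : pred gen) :
  (forall k m G, act_deg rep m (Defs.rel k) G = zero2) ->
  (forall g, P1 g -> isA g) -> (forall g, P2 g -> ~~ isA g) ->
  lin_indep_in_U P1 P2.
Proof.
move=> rel0 P1A P2B n p c p_inj p_W0 in_id.
have p_lead j : [/\ all isA (p j).1, all (predC isA) (p j).2,
    lead_word (p j).1 (alpha_free (p j).1 fa_one) &
    lead_word (p j).2 (alpha_free (p j).2 fa_one)].
  case/andP: (p_W0 j) => /andP [P1p end1] /andP [P2p end2].
  have := lead_word_alpha_free [::] end1; have := lead_word_alpha_free [::] end2.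
  by rewrite !cats0; split=> //; apply: sub_all P1p || apply: sub_all P2p.
pose T j (y : word * word) :=
  act_deg rep (size y.1 + size y.2) (elt (p j)) (tensor fa_one fa_one) y.1 y.2.
have TE j y : T j y = if (size y.1 + size y.2 == size (p j).1 + size (p j).2)%N
    then alpha_free (p j).1 fa_one y.1 * alpha_free (p j).2 fa_one y.2 else 0.
  rewrite /T (act_deg_elt lin_rep); case: (p_lead j) => A1 B2 _ _.
  by case: (_ == _); rewrite ?alpha_op_tensor_one.
apply: (@triangular_coef_eq0 _ _ _ p T (fun y => pot y.1 + pot y.2)%N c p_inj).
- by move=> j; case: (p_lead j) => _ _ [l1 _] [l2 _]; rewrite TE eqxx l1 l2 mulr1.
- move=> j y; rewrite TE; case: ifP => _; last by rewrite eqxx.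
  case: (p_lead j) => _ _ l1 l2 nz.
  by have := lead_word_mul l1 l2 nz; rewrite -surjective_pairing.
- move=> y; transitivity (act_deg rep (size y.1 + size y.2)
    (fun w => \sum_(j < n) c j * elt (p j) w) (tensor fa_one fa_one) y.1 y.2).
    by rewrite act_deg_sum.
  by rewrite (act_deg_in_ideal lin_rep).
Qed.

End Representation.

Definition isA_12 (g : gen) : bool := match g with Z1 | Z11 | Z12 => true | _ => false end.

(* [[b, a]] for [b] in [{Z2, Z22}] and [a] in [{Z1, Z11, Z12}], rewritten with the defining
   relations: [[Z2, Z12] = [Z1, Z12] - [Z11, Z12]], [[Z22, Z11] = [Z11, Z12]],
   [[Z22, Z12] = - [Z11, Z12]], all others vanish. *)
Definition dco_12 (b a : gen) : gen -> gen -> C :=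
  match b, a with
  | Z2, Z12 => fun c c' => brc Z1 Z12 c c' - brc Z11 Z12 c c'
  | Z22, Z11 => brc Z11 Z12
  | Z22, Z12 => fun c c' => - brc Z11 Z12 c c'
  | _, _ => fun _ _ => 0
  end.

Lemma act_deg_rel_12 k m G : act_deg (rep isA_12 dco_12) m (Defs.rel k) G = zero2.
Proof.
have rep_br := @act_deg_rep_br isA_12 dco_12.
case: k => -[|[|[|[|[|[|k]]]]]] lt_k //; rewrite /Defs.rel /=;
  [| | | rewrite act_degD | rewrite act_degB | rewrite act_degB act_degD];
  rewrite !rep_br //; case: (m == 2)%N; apply: FA2_ext => -[|c [|c' u]] v;
  cbv beta iota delta [lmulq zero2 brq isA_12 dco_12]; ring.
Qed.

Definition isA_21 (g : gen) : bool := match g with Z2 | Z22 | Z12 => true | _ => false end.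

(* [[Z1, Z12] = [Z2, Z12] - [Z22, Z12]], [[Z11, Z22] = [Z22, Z12]], [[Z11, Z12] = - [Z22, Z12]]. *)
Definition dco_21 (b a : gen) : gen -> gen -> C :=
  match b, a with
  | Z1, Z12 => fun c c' => brc Z2 Z12 c c' - brc Z22 Z12 c c'
  | Z11, Z22 => brc Z22 Z12
  | Z11, Z12 => fun c c' => - brc Z22 Z12 c c'
  | _, _ => fun _ _ => 0
  end.

Lemma act_deg_rel_21 k m G : act_deg (rep isA_21 dco_21) m (Defs.rel k) G = zero2.
Proof.
have rep_br := @act_deg_rep_br isA_21 dco_21.
case: k => -[|[|[|[|[|[|k]]]]]] lt_k //; rewrite /Defs.rel /=;
  [| | | rewrite act_degD | rewrite act_degB | rewrite act_degB act_degD];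
  rewrite !rep_br //; case: (m == 2)%N; apply: FA2_ext => -[|c [|c' u]] v;
  cbv beta iota delta [lmulq zero2 brq isA_21 dco_21]; ring.
Qed.

Theorem lemma7p5 :
  lin_indep_in_U gens_X1_12 gens_X2_12 /\ lin_indep_in_U gens_X2_21 gens_X1_21.
Proof.
split.
- apply: (@lin_indep_in_U_of_rep isA_12 dco_12);
    [by case; case | exact: act_deg_rel_12 | by case ..].
- apply: (@lin_indep_in_U_of_rep isA_21 dco_21);
    [by case; case | exact: act_deg_rel_21 | by case ..].
Qed.
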